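(* Let $m_1 \ge 0$ and let $\mathbf m=[m_2,m_3,\ldots]$ be a sequence of nonnegative integers with finitely many nonzero entries. Put $E = m_1 + 1 + 2m_2 + 3m_3 + 4m_4 + \cdots$ and $V = 2 + m_2 + 2m_3 + 3m_4 + \cdots$. Then the number $R_{m_1;\mathbf m}$ of tubdigons of type $[m_1;\mathbf m]$ equals $$R_{m_1;\mathbf m} = \frac{(E-1)!}{(V-1)!\; m_1!\; m_2!\, m_3! \cdots}.$$
   Context: Tubdigons are the formal expressions generated as follows: the null tubdigon $|$ is a tubdigon, and for every integer $k\ge 1$ and tubdigons $s_1,\ldots,s_k$, the expression $\nabla_k(s_1,\ldots,s_k)$ is a tubdigon (two tubdigons are equal iff they are identical expressions). Geometrically, $\nabla_k(s_1,\ldots,s_k)$ is a roofed $(k+1)$-gon (a 2-gon when $k=1$) with $s_1,\ldots,s_k$ glued along their roofs to its non-roof sides in counterclockwise order; so tubdigons are roofed convex polygons subdivided by non-crossing diagonals into polygons, where 2-gons (doubled edges) are also allowed. The type of a tubdigon is $[m_1;m_2,m_3,\ldots]$ where $m_k$ is the number of occurrences of $\nabla_k$ (the number of $(k+1)$-gon faces). Such a tubdigon has $E$ edges and $V$ vertices as defined in the claim. *)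

From Stdlib Require Import List.
From mathcomp Require Import all_boot.

Set Implicit Arguments.
Unset Strict Implicit.
Unset Printing Implicit Defensive.

(* Tubdigons: the null tubdigon | (Null), and nabla_k(s_1,...,s_k) for k >= 1,
   represented as Nabla s_1 [:: s_2; ...; s_k], so that k = 1 + size of the list. *)
Inductive tubdigon : Type :=
| Null : tubdigon
| Nabla : tubdigon -> seq tubdigon -> tubdigon.

Definition nabla_arity (s1 : tubdigon) (ss : seq tubdigon) : nat := (size ss).+1.

Fixpoint occ (k : nat) (t : tubdigon) : nat :=
  match t with
  | Null => 0
  | Nabla s1 ss => (k == nabla_arity s1 ss) + occ k s1 + sumn (map (occ k) ss)
  end.

(* t has type [m1; ms] where ms = [:: m_2; m_3; ...] (entries beyond size ms are 0). *)
Definition has_type (m1 : nat) (ms : seq nat) (t : tubdigon) : Prop :=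
  occ 1 t = m1 /\ forall k, 2 <= k -> occ k t = nth 0 ms (k - 2).

Definition E_of (m1 : nat) (ms : seq nat) : nat :=
  m1 + 1 + \sum_(i < size ms) (i + 2) * nth 0 ms i.

Definition V_of (ms : seq nat) : nat :=
  2 + \sum_(i < size ms) (i + 1) * nth 0 ms i.

From Stdlib Require Import List.
From HB Require Import structures.
From mathcomp Require Import all_boot zify.

Set Implicit Arguments.
Unset Strict Implicit.
Unset Printing Implicit Defensive.

(* Read a tubdigon as a plane tree in which nabla_k is a node with k children
   and the null tubdigon is a leaf, i.e. a node of arity 0.  Let a forest of c
   such trees have v_k nodes of arity k, n nodes in all.  Counting children
   gives c + sum_k k v_k = n.  Deleting the root of the first tree, of arity i,
   leaves a forest of c - 1 + i trees with v_i lowered by one, and every forest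
   arises exactly once by grafting a root of arity i onto the first i trees of
   such a smaller forest.  Induction on n then yields c (n-1)! / prod_k v_k!
   forests.  A tubdigon of type [m1; m] is a single tree whose number of
   leaves is forced by the balance identity to be V - 1, and then n = E. *)

Fixpoint tubdigon_nested_ind (P : tubdigon -> Prop) (HNull : P Null)
    (HNabla : forall s ss, P s -> List.Forall P ss -> P (Nabla s ss))
    (t : tubdigon) : P t :=
  match t with
  | Null => HNull
  | Nabla s ss =>
      HNabla s ss (tubdigon_nested_ind HNull HNabla s)
        ((fix all_ind (l : seq tubdigon) : List.Forall P l :=
            match l with
            | [::] => List.Forall_nil _
            | x :: l' => List.Forall_cons _ (tubdigon_nested_ind HNull HNabla x) (all_ind l')
            end) ss)
  end.

Fixpoint tree_of_tubdigon (t : tubdigon) : GenTree.tree nat :=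
  match t with
  | Null => GenTree.Node 0 [::]
  | Nabla s ss => GenTree.Node 1 (tree_of_tubdigon s :: map tree_of_tubdigon ss)
  end.

Fixpoint tubdigon_of_tree (x : GenTree.tree nat) : tubdigon :=
  match x with
  | GenTree.Node 1 (y :: ys) => Nabla (tubdigon_of_tree y) (map tubdigon_of_tree ys)
  | _ => Null
  end.

Lemma tree_of_tubdigonK : cancel tree_of_tubdigon tubdigon_of_tree.
Proof.
elim/tubdigon_nested_ind => //= s ss -> IHss; congr Nabla.
by elim: IHss => //= x l -> _ ->.
Qed.

HB.instance Definition _ := Equality.copy tubdigon (can_type tree_of_tubdigonK).

Fixpoint nulls (t : tubdigon) : nat :=
  match t with Null => 1 | Nabla s ss => nulls s + sumn (map nulls ss) end.

Definition arity_occ (k : nat) (t : tubdigon) : nat :=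
  if k == 0 then nulls t else occ k t.

Lemma arity_occ_Nabla k s ss :
  arity_occ k (Nabla s ss) =
  (k == (size ss).+1) + arity_occ k s + sumn (map (arity_occ k) ss).
Proof. by case: k. Qed.

Definition forest_occ (k : nat) (f : seq tubdigon) : nat :=
  sumn (map (arity_occ k) f).

Definition head_arity (f : seq tubdigon) : nat :=
  if f is Nabla _ ss :: _ then (size ss).+1 else 0.

Definition ungraft (f : seq tubdigon) : seq tubdigon :=
  match f with
  | Nabla s ss :: g => s :: ss ++ g
  | _ :: g => g
  | [::] => [::]
  end.

Definition graft (i : nat) (g : seq tubdigon) : seq tubdigon :=
  match i, g with
  | 0, _ => Null :: g
  | j.+1, s :: r => Nabla s (take j r) :: drop j r
  | _.+1, [::] => [::]
  end.

Lemma ungraftK f : f != [::] -> graft (head_arity f) (ungraft f) = f.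
Proof.
by case: f => [|[|s ss] g] //= _; rewrite take_size_cat ?drop_size_cat.
Qed.

Lemma size_ungraft f : f != [::] -> size (ungraft f) = (size f).-1 + head_arity f.
Proof. by case: f => [|[|s ss] g] //= _; rewrite ?addn0 // size_cat addnC addnS. Qed.

Lemma forest_occ_ungraft k f :
  f != [::] -> forest_occ k f = (k == head_arity f) + forest_occ k (ungraft f).
Proof.
case: f => [|[|s ss] g] //= _.
by rewrite /forest_occ /= arity_occ_Nabla map_cat sumn_cat !addnA.
Qed.

Lemma graftK i g : i <= size g ->
  [/\ graft i g != [::], head_arity (graft i g) = i & ungraft (graft i g) = g].
Proof.
case: i => [|j] //; case: g => [|s r] //=; rewrite ltnS => le_jr.
by rewrite size_take_min (minn_idPl le_jr) cat_take_drop.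
Qed.

Lemma size_graft i g : i <= size g -> size (graft i g) = (size g - i).+1.
Proof.
by case: i => [|j]; case: g => [|s r] //= _; rewrite ?subn0 // size_drop subSS.
Qed.

Lemma forest_occ_graft k i g : i <= size g ->
  forest_occ k (graft i g) = (k == i) + forest_occ k g.
Proof. by case/graftK=> nz hd un; rewrite forest_occ_ungraft // hd un. Qed.

Definition decr_nth (v : seq nat) (i : nat) : seq nat := set_nth 0 v i (nth 0 v i).-1.

Lemma nth_decr_nth v i k : nth 0 (decr_nth v i) k = nth 0 v k - (k == i).
Proof.
by rewrite nth_set_nth /=; case: eqP => [->|]; rewrite ?subn1 ?subn0.
Qed.

Lemma nth_gt0_size v i : 0 < nth 0 v i -> i < size v.
Proof. by apply: contraTT; rewrite -leqNgt => /(nth_default 0) ->. Qed.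

Lemma size_decr_nth v i : 0 < nth 0 v i -> size (decr_nth v i) = size v.
Proof. by move/nth_gt0_size=> lt_iv; rewrite size_set_nth (maxn_idPr lt_iv). Qed.

Lemma sumn_decr_nth v i : 0 < nth 0 v i -> (sumn (decr_nth v i)).+1 = sumn v.
Proof.
rewrite /decr_nth; elim: v i => [|x v IH] [|i] //=; first by case: x.
by move/IH <-; rewrite addnS.
Qed.

Definition prod_fact (v : seq nat) : nat := \prod_(x <- v) x`!.

Lemma prod_fact_decr_nth v i :
  0 < nth 0 v i -> prod_fact (decr_nth v i) * nth 0 v i = prod_fact v.
Proof.
rewrite /prod_fact /decr_nth; elim: v i => [|x v IH] [|i] //=; rewrite !big_cons.
  by case: x => // x _; rewrite factS mulnAC [x.+1 * _]mulnC.
by move/IH <-; rewrite mulnA.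
Qed.

Definition weighted_sumn (v : seq nat) : nat := \sum_(i < size v) i * nth 0 v i.

Lemma weighted_sumn_decr_nth v i :
  0 < nth 0 v i -> weighted_sumn (decr_nth v i) + i = weighted_sumn v.
Proof.
move=> vi_gt0; have lt_iv := nth_gt0_size vi_gt0.
rewrite /weighted_sumn size_decr_nth // [in LHS](bigD1 (Ordinal lt_iv)) //.
rewrite [in RHS](bigD1 (Ordinal lt_iv)) //= nth_decr_nth eqxx.
rewrite (eq_bigr (fun j : 'I_(size v) => j * nth 0 v j)) => [|j ji]; last first.
  by rewrite nth_decr_nth (_ : (j == i :> nat) = false) ?subn0 //; apply: negbTE.
by rewrite addnAC -mulnSr subn1 prednK.
Qed.

Lemma sumn_nth v : sumn v = \sum_(i < size v) nth 0 v i.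
Proof. by rewrite sumnE (big_nth 0) big_mkord. Qed.

Lemma sumn_eq0_nth v : sumn v = 0 <-> forall k, nth 0 v k = 0.
Proof.
split=> [/eqP/natnseq0P-> k | v0]; first by rewrite nth_nseq if_same.
by rewrite sumn_nth big1.
Qed.

Definition forest_type (c : nat) (v : seq nat) (f : seq tubdigon) : Prop :=
  size f = c /\ forall k, forest_occ k f = nth 0 v k.

Lemma forest_type_nil c v : forest_type c v [::] <-> c = 0 /\ sumn v = 0.
Proof.
rewrite sumn_eq0_nth; split=> [[<- v0] | [-> v0]]; split=> // k.
by rewrite -v0.
Qed.

Lemma forest_type_ungraft c v f : f != [::] -> forest_type c v f ->
  let i := head_arity f in
  0 < nth 0 v i /\ forest_type (c.-1 + i) (decr_nth v i) (ungraft f).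
Proof.
move=> nz [<- occ_f] i.
have occ_i k : nth 0 v k = (k == i) + forest_occ k (ungraft f).
  by rewrite -occ_f forest_occ_ungraft.
split; first by rewrite occ_i eqxx.
by split=> [|k]; rewrite ?size_ungraft // nth_decr_nth occ_i addKn.
Qed.

Lemma forest_type_graft c v i g : 0 < c -> 0 < nth 0 v i ->
  forest_type (c.-1 + i) (decr_nth v i) g -> forest_type c v (graft i g).
Proof.
move=> c_gt0 vi_gt0 [size_g occ_g]; have le_ig : i <= size g by rewrite size_g leq_addl.
split=> [|k]; first by rewrite size_graft // size_g addnK prednK.
rewrite forest_occ_graft // occ_g nth_decr_nth.
by case: eqP => [->|_]; rewrite ?subn0 // subnKC.
Qed.

Lemma forest_type_eq_nil c v f : forest_type c v f -> (f == [::]) = (sumn v == 0).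
Proof.
have [-> /forest_type_nil[_ ->] // | nz ftype] := eqVneq f [::].
have [vi_gt0 _] := forest_type_ungraft nz ftype.
by rewrite -(sumn_decr_nth vi_gt0).
Qed.

Lemma forest_type_balance c v f : forest_type c v f -> c + weighted_sumn v = sumn v.
Proof.
move sv: (sumn v) => n; elim: n c v f sv => [|n IH] c v f sv ftype.
  have /eqP f0 : f == [::] by rewrite (forest_type_eq_nil ftype) sv.
  move: ftype; rewrite f0 => /forest_type_nil[-> _]; move/sumn_eq0_nth: sv => v0.
  by rewrite /weighted_sumn big1 // => i _; rewrite v0 muln0.
have nz : f != [::] by rewrite (forest_type_eq_nil ftype) sv.
have [vi_gt0 ftype'] := forest_type_ungraft nz ftype.
have sv' : sumn (decr_nth v (head_arity f)) = n.
  by apply: succn_inj; rewrite sumn_decr_nth.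
have := IH _ _ _ sv' ftype'; rewrite -(weighted_sumn_decr_nth vi_gt0).
have f_gt0 : 0 < size f by case: (f) nz.
by case: ftype => <- _; lia.
Qed.

(* [n] is recursion fuel, always instantiated with [sumn v]. *)
Fixpoint forests (n c : nat) (v : seq nat) : seq (seq tubdigon) :=
  if n is n'.+1 then
    if c == 0 then [::] else
    [seq graft i g | i <- [seq i <- iota 0 (size v) | 0 < nth 0 v i],
                     g <- forests n' (c.-1 + i) (decr_nth v i)]
  else if c == 0 then [:: [::]] else [::].

Lemma mem_forests n c v f : sumn v = n -> f \in forests n c v <-> forest_type c v f.
Proof.
elim: n c v f => [|n IH] c v f sv /=.
  split=> [|ftype].
    by case: eqP => // ->; rewrite inE => /eqP ->; exact/forest_type_nil.
  have /eqP f0 : f == [::] by rewrite (forest_type_eq_nil ftype) sv.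
  by move: ftype; rewrite f0 => /forest_type_nil[-> _]; rewrite inE.
have sv' i : 0 < nth 0 v i -> sumn (decr_nth v i) = n.
  by move=> vi_gt0; apply: succn_inj; rewrite sumn_decr_nth.
split=> [|ftype].
  case: eqP => // /eqP c_neq0 /allpairsPdep[i [g [+ + ->]]].
  rewrite mem_filter => /andP[vi_gt0 _] /(IH _ _ _ (sv' i vi_gt0)) gtype.
  by apply: forest_type_graft; rewrite // lt0n.
have nz : f != [::] by rewrite (forest_type_eq_nil ftype) sv.
have [vi_gt0 ftype'] := forest_type_ungraft nz ftype.
have c_neq0 : c != 0 by case: ftype => <- _; rewrite size_eq0.
rewrite (negbTE c_neq0) -(ungraftK nz).
apply: allpairs_f_dep; first by rewrite mem_filter vi_gt0 mem_iota nth_gt0_size.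
exact/(IH _ _ _ (sv' _ vi_gt0)).
Qed.

Lemma forests_uniq n c v : sumn v = n -> uniq (forests n c v).
Proof.
elim: n c v => [|n IH] c v sv /=; first by case: eqP.
have sv' i : 0 < nth 0 v i -> sumn (decr_nth v i) = n.
  by move=> vi_gt0; apply: succn_inj; rewrite sumn_decr_nth.
have size_g i g : 0 < nth 0 v i -> g \in forests n (c.-1 + i) (decr_nth v i) -> i <= size g.
  by move=> vi_gt0 /(mem_forests _ _ (sv' i vi_gt0))[-> _]; rewrite leq_addl.
case: eqP => // _; apply: allpairs_uniq_dep => [|i|].
- exact/filter_uniq/iota_uniq.
- by rewrite mem_filter => /andP[vi_gt0 _]; apply/IH/sv'.
move=> [i1 g1] [i2 g2] /allpairsPdep[j1 [h1 [j1_in h1_in [-> ->]]]].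
move=> /allpairsPdep[j2 [h2 [j2_in h2_in [-> ->]]]] /= same.
move: j1_in j2_in; rewrite !mem_filter => /andP[v1 _] /andP[v2 _].
have [_ hd1 un1] := graftK (size_g _ _ v1 h1_in).
have [_ hd2 un2] := graftK (size_g _ _ v2 h2_in).
have ij : j1 = j2 by rewrite -hd1 -hd2 same.
by subst j2; rewrite -un1 -un2 same.
Qed.

Lemma size_forestsS n c v :
  size (forests n.+1 c.+1 v) * prod_fact v =
  \sum_(i < size v)
     nth 0 v i * (size (forests n (c + i) (decr_nth v i)) * prod_fact (decr_nth v i)).
Proof.
rewrite /= size_allpairs_dep sumnE big_map big_filter big_mkcond big_distrl /=.
have -> : iota 0 (size v) = index_iota 0 (size v) by rewrite /index_iota subn0.
rewrite big_mkord.
apply: eq_bigr => i _; case: ifP => [vi_gt0 | /negbT]; last first.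
  by rewrite -eqn0Ngt => /eqP ->.
by rewrite -(prod_fact_decr_nth vi_gt0) mulnA mulnC.
Qed.

Lemma size_forests n c v : sumn v = n -> c + weighted_sumn v = n ->
  size (forests n c v) * prod_fact v = if n == 0 then 1 else c * n.-1`!.
Proof.
elim: n c v => [|n IH] c v sv balance.
  have -> : c = 0 by lia.
  move/eqP/natnseq0P: sv => ->.
  by rewrite /prod_fact big1_seq // => x /nseqP[->].
case: c balance => [|c] balance //; rewrite size_forestsS.
rewrite (eq_bigr (fun i : 'I_(size v) =>
    nth 0 v i * (if n == 0 then 1 else (c + i) * n.-1`!))) => [|i _]; last first.
  have [-> // | vi_gt0] := posnP (nth 0 v i).
  rewrite IH //; first by apply: succn_inj; rewrite sumn_decr_nth.
  by have := weighted_sumn_decr_nth vi_gt0; lia.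
case: n {IH} sv balance => [|n] sv balance /=.
  by rewrite (eq_bigr _ (fun i _ => muln1 _)) -sumn_nth sv fact0; lia.
rewrite (eq_bigr (fun i : 'I_(size v) => c * n`! * nth 0 v i + n`! * (i * nth 0 v i)))
  => [|i _]; last by rewrite mulnDl; nia.
rewrite big_split -!big_distrr /= -sumn_nth -/(weighted_sumn v) sv factS.
have -> : weighted_sumn v = n.+1 - c by lia.
have c_le : c <= n.+1 by lia.
nia.
Qed.

Lemma weighted_sumn_cons2 a b ms :
  weighted_sumn [:: a, b & ms] = b + \sum_(i < size ms) (i + 2) * nth 0 ms i.
Proof.
rewrite /weighted_sumn /= !big_ord_recl /= mul0n mul1n add0n; congr (_ + _).
by apply: eq_bigr => i _; rewrite addn2.
Qed.

Lemma E_of_V_of m1 ms : E_of m1 ms = m1 + (V_of ms).-1 + sumn ms.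
Proof.
rewrite /E_of /V_of sumn_nth.
have -> : \sum_(i < size ms) (i + 2) * nth 0 ms i =
    \sum_(i < size ms) (i + 1) * nth 0 ms i + \sum_(i < size ms) nth 0 ms i.
  by rewrite -big_split; apply: eq_bigr => i _ /=; rewrite !mulnDl; lia.
lia.
Qed.

Lemma forest_type1 v t :
  forest_type 1 v [:: t] <-> forall k, arity_occ k t = nth 0 v k.
Proof.
rewrite /forest_type /forest_occ /=.
by split=> [[_ occ_t] k | occ_t]; [rewrite -occ_t addn0 | split=> // k; rewrite addn0].
Qed.

Definition type_vector (m1 : nat) (ms : seq nat) : seq nat := [:: (V_of ms).-1, m1 & ms].

Lemma has_type_forest_type m1 ms t :
  has_type m1 ms t <-> forest_type 1 (type_vector m1 ms) [:: t].
Proof.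
rewrite forest_type1; split=> [[occ1 occ_ge2] | occ_t]; last first.
  split=> [|[|[|k]] //= _]; first exact: occ_t 1.
  by rewrite !subSS subn0; exact: occ_t k.+2.
have occ_t k : arity_occ k t = nth 0 [:: nulls t, m1 & ms] k.
  by case: k => [|[|k]] //=; rewrite /arity_occ /= occ_ge2 // !subSS subn0.
rewrite /type_vector; set V := (V_of ms).-1; suff -> : V = nulls t by [].
have := forest_type_balance (proj2 (forest_type1 _ _) occ_t).
have := E_of_V_of m1 ms; rewrite -/V /E_of weighted_sumn_cons2 /=.
by set S := \sum_(i < size ms) _; lia.
Qed.

Lemma In_mem (T : eqType) (x : T) (s : seq T) : In x s <-> x \in s.
Proof.
elim: s => [|y s IH] //=; rewrite in_cons; split.
  by case=> [->|/IH->]; rewrite ?eqxx ?orbT.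
by case/orP=> [/eqP->|/IH]; [left | right].
Qed.

Lemma uniq_NoDup (T : eqType) (s : seq T) : uniq s -> NoDup s.
Proof.
elim: s => [|x s IH] /=; first by constructor.
by case/andP=> x_notin s_uniq; constructor; [rewrite In_mem; apply/negP | apply: IH].
Qed.

Theorem mainTheorem3 (m1 : nat) (ms : seq nat) :
  exists s : list tubdigon,
    NoDup s /\
    (forall t, In t s <-> has_type m1 ms t) /\
    size s * ((V_of ms).-1 `! * m1 `! * \prod_(x <- ms) x `!) = (E_of m1 ms).-1 `!.
Proof.
set v := type_vector m1 ms; set E := E_of m1 ms.
have sv : sumn v = E by rewrite /E E_of_V_of /= addnA [_ + m1]addnC.
have balance : 1 + weighted_sumn v = E.
  by rewrite weighted_sumn_cons2 /E /E_of addnA [1 + m1]addnC.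
have single f : f \in forests E 1 v -> f = [:: head Null f].
  by case/(mem_forests _ _ sv); case: f => [|t [|]].
exists [seq head Null f | f <- forests E 1 v]; split; [|split].
- apply: uniq_NoDup; rewrite map_inj_in_uniq ?forests_uniq // => f g /single fE /single gE.
  by move=> same; rewrite fE gE same.
- move=> t; rewrite In_mem has_type_forest_type -(mem_forests _ _ sv); split.
    by case/mapP=> f f_in ->; rewrite -(single f f_in).
  by move=> t_in; apply/mapP; exists [:: t].
have -> : (V_of ms).-1`! * m1`! * \prod_(x <- ms) x`! = prod_fact v.
  by rewrite /prod_fact !big_cons mulnA.
by rewrite size_map size_forests // -balance add1n mul1n.
Qed.
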